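(* Let $F^{(a)}(x,y)$ and $F^{(b)}(x,y)$ be homogeneous polynomials of degree $2$ in two variables with nonnegative integer coefficients, and define $a_0=b_0=1$, $a_n=F^{(a)}(a_{n-1},b_{n-1})$, $b_n=F^{(b)}(a_{n-1},b_{n-1})$ for $n\ge 1$. If $a_1=b_1$, then $a_n=b_n$ for all $n\in\mathbb{N}$.
   Context: This is an SNRE of degree $(2,2)$; note that with the convention $a_0=b_0=1$, $a_1$ and $b_1$ equal the sums of the coefficients of $F^{(a)}$ and $F^{(b)}$ respectively. *)

From mathcomp Require Import all_boot.
Set Implicit Arguments. Unset Strict Implicit. Unset Printing Implicit Defensive.

Definition hquad (c : nat * nat * nat) (x y : nat) : nat :=
  c.1.1 * x ^ 2 + c.1.2 * (x * y) + c.2 * y ^ 2.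

Fixpoint snre (ca cb : nat * nat * nat) (n : nat) : nat * nat :=
  match n with
  | 0 => (1, 1)
  | k.+1 => let '(a, b) := snre ca cb k in (hquad ca a b, hquad cb a b)
  end.

Definition seq_a ca cb n := (snre ca cb n).1.
Definition seq_b ca cb n := (snre ca cb n).2.

From mathcomp Require Import all_boot.

(* On the diagonal a quadratic form is its value at (1, 1) times x^2, so equal
   coefficient sums keep the pair (a_n, b_n) on the diagonal forever. *)

Lemma hquad_diag c x : hquad c x x = hquad c 1 1 * x ^ 2.
Proof. by rewrite /hquad !muln1 !mulnDl. Qed.

Lemma snre_diag ca cb :
  hquad ca 1 1 = hquad cb 1 1 -> forall n, exists x, snre ca cb n = (x, x).
Proof.
move=> eq11; elim=> [|n [x IHn]]; first by exists 1.
by exists (hquad ca x x); rewrite /= IHn (hquad_diag ca) (hquad_diag cb) eq11.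
Qed.

Theorem proposition1 (ca cb : nat * nat * nat) :
  seq_a ca cb 1 = seq_b ca cb 1 ->
  forall n : nat, seq_a ca cb n = seq_b ca cb n.
Proof.
move=> eq1 n; rewrite /seq_a /seq_b.
by have [x ->] := @snre_diag ca cb eq1 n.
Qed.
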